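(* Let $\alpha\in(0,1]$ and let $n$ be such that $n^\alpha=2^q$ for a positive integer $q$. Let $R\subset\mathrm{conv}(A_n)$ be an open axis-aligned rectangle such that either [$w(R)>1$ and $h(R)>n^\alpha$] or [$w(R)>n^\alpha$ and $h(R)>1$]. Then $R$ contains a point of $B_n$ lying on a forward diagonal and a point of $B_n$ lying on a backward diagonal.
   Context: Let $A_n=\{(i,j)\in\mathbb{Z}^2: 0\le i,j\le 14n\}$, so $\mathrm{conv}(A_n)=[0,14n]^2$. The sparse grid $B_n\subseteq A_n$ is the set of points of $A_n$ of at least one of the following forms: (1) $(i,j)$ with $n^\alpha \mid ij$; (2) $(i+k,j+k)$ with $n^\alpha\mid i$, $n^\alpha\mid j$, $k\in\{1,\dots,n^\alpha\}$; (3) $(i+k,j-k)$ with $n^\alpha\mid i$, $n^\alpha\mid j$, $k\in\{1,\dots,n^\alpha\}$. A point of $A_n$ of form (2) is said to lie on a forward diagonal, and a point of $A_n$ of form (3) on a backward diagonal. For an open rectangle $R=(x_1,x_2)\times(y_1,y_2)$, $w(R)=x_2-x_1$ and $h(R)=y_2-y_1$. *)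

From Stdlib Require Export Reals ZArith.
Open Scope R_scope.

Definition in_A (n : nat) (p : Z * Z) : Prop :=
  (0 <= fst p <= 14 * Z.of_nat n)%Z /\ (0 <= snd p <= 14 * Z.of_nat n)%Z.

(* m plays the role of n^alpha (an integer, = 2^q). *)
Definition form1 (m : Z) (p : Z * Z) : Prop := (m | fst p * snd p)%Z.

Definition forward_diag (m : Z) (p : Z * Z) : Prop :=
  exists i j k : Z, (m | i)%Z /\ (m | j)%Z /\ (1 <= k <= m)%Z /\
                    p = (i + k, j + k)%Z.

Definition backward_diag (m : Z) (p : Z * Z) : Prop :=
  exists i j k : Z, (m | i)%Z /\ (m | j)%Z /\ (1 <= k <= m)%Z /\
                    p = (i + k, j - k)%Z.

Definition in_B (n : nat) (m : Z) (p : Z * Z) : Prop :=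
  in_A n p /\ (form1 m p \/ forward_diag m p \/ backward_diag m p).

Definition in_open_rect (x1 x2 y1 y2 : R) (p : Z * Z) : Prop :=
  x1 < IZR (fst p) < x2 /\ y1 < IZR (snd p) < y2.

From Stdlib Require Import Reals ZArith Lia Lra.
Open Scope R_scope.

(* A lattice point (a, b) lies on a forward diagonal as soon as a = b (mod m)
   (take k = ((a - 1) mod m) + 1, the representative of a in 1..m), and on a
   backward diagonal as soon as a = -b (mod m).  An open interval of length > 1
   contains an integer and one of length > m contains every residue mod m, so a
   rectangle with one side > 1 and the other > m contains points realising
   both congruences. *)

Lemma exists_Z_between (x1 x2 : R) : x2 - x1 > 1 -> exists a : Z, x1 < IZR a < x2.
Proof.
  intros Hlen; destruct (archimed x1) as [Hup1 Hup2].
  exists (up x1); lra.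
Qed.

Lemma exists_Z_between_mod (m r : Z) (y1 y2 : R) :
  (0 < m)%Z -> y2 - y1 > IZR m ->
  exists b : Z, y1 < IZR b < y2 /\ (b mod m = r mod m)%Z.
Proof.
  intros Hm Hlen; destruct (archimed y1) as [Hup1 Hup2].
  set (c := up y1) in *.
  set (t := ((r - c) mod m)%Z).
  assert (Ht : (0 <= t < m)%Z) by (apply Z.mod_pos_bound; lia).
  exists (c + t)%Z; split.
  - rewrite plus_IZR.
    assert (0 <= IZR t) by (apply IZR_le; lia).
    assert (IZR t <= IZR m - 1) by (rewrite <- minus_IZR; apply IZR_le; lia).
    lra.
  - unfold t; rewrite Zplus_mod_idemp_r; f_equal; ring.
Qed.

Lemma forward_diag_of_eqmod (m a b : Z) :
  (0 < m)%Z -> (a mod m = b mod m)%Z -> forward_diag m (a, b).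
Proof.
  intros Hm Hab.
  pose proof (Z_div_mod_eq_full (a - 1) m) as Ea1.
  pose proof (Z_div_mod_eq_full a m) as Ea.
  pose proof (Z_div_mod_eq_full b m) as Eb.
  pose proof (Z.mod_pos_bound (a - 1) m Hm) as Hr.
  set (r := ((a - 1) mod m)%Z) in *.
  exists (a - (r + 1))%Z, (b - (r + 1))%Z, (r + 1)%Z.
  split; [|split; [|split]].
  - exists ((a - 1) / m)%Z; lia.
  - exists (b / m - a / m + (a - 1) / m)%Z; rewrite Hab in Ea; nia.
  - lia.
  - f_equal; ring.
Qed.

Lemma backward_diag_of_forward_diag_opp (m a b : Z) :
  forward_diag m (a, - b)%Z -> backward_diag m (a, b).
Proof.
  intros (i & j & k & Hi & Hj & Hk & Hp); injection Hp as Ha Hb.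
  exists i, (- j)%Z, k; split; [exact Hi | split; [| split; [exact Hk |]]].
  - now apply Z.divide_opp_r.
  - f_equal; lia.
Qed.

Lemma in_A_of_in_open_rect (n : nat) (x1 x2 y1 y2 : R) (p : Z * Z) :
  0 <= x1 -> x2 <= 14 * INR n -> 0 <= y1 -> y2 <= 14 * INR n ->
  in_open_rect x1 x2 y1 y2 p -> in_A n p.
Proof.
  intros Hx1 Hx2 Hy1 Hy2 [[Ha1 Ha2] [Hb1 Hb2]].
  rewrite INR_IZR_INZ, <- mult_IZR in Hx2, Hy2.
  assert (Ha : (0 < fst p < 14 * Z.of_nat n)%Z)
    by (split; apply lt_IZR; lra).
  assert (Hb : (0 < snd p < 14 * Z.of_nat n)%Z)
    by (split; apply lt_IZR; lra).
  unfold in_A; lia.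
Qed.

(* Since s * s = 1, the congruence a = s b (mod m) is symmetric in a and b, so
   either side of the rectangle may carry the free integer coordinate. *)
Lemma exists_in_open_rect_eqmod (m s : Z) (x1 x2 y1 y2 : R) :
  (0 < m)%Z -> (s * s = 1)%Z ->
  (x2 - x1 > 1 /\ y2 - y1 > IZR m) \/ (x2 - x1 > IZR m /\ y2 - y1 > 1) ->
  exists p : Z * Z,
    in_open_rect x1 x2 y1 y2 p /\ (fst p mod m = (s * snd p) mod m)%Z.
Proof.
  intros Hm Hs [[Hw Hh] | [Hw Hh]].
  - destruct (exists_Z_between _ _ Hw) as [a Ha].
    destruct (exists_Z_between_mod m (s * a) _ _ Hm Hh) as [b [Hb Hbmod]].
    exists (a, b); split; [split; simpl; lra |]; simpl.
    rewrite <- Zmult_mod_idemp_r, Hbmod, Zmult_mod_idemp_r, Z.mul_assoc, Hs.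
    now rewrite Z.mul_1_l.
  - destruct (exists_Z_between _ _ Hh) as [b Hb].
    destruct (exists_Z_between_mod m (s * b) _ _ Hm Hw) as [a [Ha Hamod]].
    exists (a, b); split; [split; simpl; lra | exact Hamod].
Qed.

Theorem lemma5 (alpha : R) (n q : nat) :
  0 < alpha <= 1 ->
  (0 < q)%nat ->
  Rpower (INR n) alpha = 2 ^ q ->
  forall x1 x2 y1 y2 : R,
    x1 < x2 -> y1 < y2 ->
    0 <= x1 -> x2 <= 14 * INR n -> 0 <= y1 -> y2 <= 14 * INR n ->
    ((x2 - x1 > 1 /\ y2 - y1 > Rpower (INR n) alpha) \/
     (x2 - x1 > Rpower (INR n) alpha /\ y2 - y1 > 1)) ->
    (exists p : Z * Z, in_B n (2 ^ Z.of_nat q)%Z p /\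
        forward_diag (2 ^ Z.of_nat q)%Z p /\ in_open_rect x1 x2 y1 y2 p) /\
    (exists p : Z * Z, in_B n (2 ^ Z.of_nat q)%Z p /\
        backward_diag (2 ^ Z.of_nat q)%Z p /\ in_open_rect x1 x2 y1 y2 p).
Proof.
  intros _ _ Hpow x1 x2 y1 y2 _ _ Hx1 Hx2 Hy1 Hy2 Hsides.
  set (m := (2 ^ Z.of_nat q)%Z).
  assert (Hm : (0 < m)%Z) by (apply Z.pow_pos_nonneg; lia).
  assert (Hsides' : (x2 - x1 > 1 /\ y2 - y1 > IZR m) \/
                    (x2 - x1 > IZR m /\ y2 - y1 > 1))
    by (unfold m; rewrite <- pow_IZR, <- Hpow; exact Hsides).
  pose proof (in_A_of_in_open_rect n x1 x2 y1 y2) as HA.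
  split.
  - destruct (exists_in_open_rect_eqmod m 1 _ _ _ _ Hm eq_refl Hsides')
      as [[a b] [Hin Hmod]].
    rewrite Z.mul_1_l in Hmod.
    pose proof (forward_diag_of_eqmod m a b Hm Hmod) as Hfwd.
    exists (a, b); split; [split; [| right; left] |]; auto.
  - destruct (exists_in_open_rect_eqmod m (-1) _ _ _ _ Hm eq_refl Hsides')
      as [[a b] [Hin Hmod]].
    replace (-1 * b)%Z with (- b)%Z in Hmod by ring.
    pose proof (backward_diag_of_forward_diag_opp m a b
                  (forward_diag_of_eqmod m a (- b) Hm Hmod)) as Hbwd.
    exists (a, b); split; [split; [| right; right] |]; auto.
Qed.
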